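(* Let $1\leq l\leq p$ and set the truncation level $K:=n^{\frac lp}M$. Then \[ \left|\mathbb{E}[\underline{Z}-Z]\right|\leq\frac{M}{n^{l(1-\frac1p)}} \] and $\underline{\sigma}\leq\sigma$.
   Context: Let $n,N$ be positive integers and $\mathcal{Z}_1,\dots,\mathcal{Z}_n$ probability spaces; all random variables live on the product space with the product measure. For $1\leq i\leq n$, $1\leq j\leq N$ let $Z_i(j):\mathcal{Z}_i\to\mathbb{R}$ be random variables, $Z:=\max_{1\leq j\leq N}\left|\frac1n\sum_{i=1}^nZ_i(j)\right|$. Let $\mathcal{E}_i:\mathcal{Z}_i\to\mathbb{R}$ satisfy $|Z_i(j)|\leq\mathcal{E}_i$ for all $i,j$, and assume there are $p\in[1,\infty)$ and $M>0$ with $\mathbb{E}\mathcal{E}_i^p\leq M^p$ for all $i$. Let $\sigma:=\sqrt{\max_{j}\frac1n\sum_{i=1}^n\mathbb{E}Z_i(j)^2}$. For a truncation level $K>0$ define $\underline{Z}_i(j):=Z_i(j)\mathbf{1}_{\{\mathcal{E}_i\leq K\}}$, $\underline{Z}:=\max_{1\leq j\leq N}\left|\frac1n\sum_{i=1}^n\underline{Z}_i(j)\right|$ and $\underline{\sigma}:=\sqrt{\max_{1\leq j\leq N}\frac1n\sum_{i=1}^n\operatorname{Var}\underline{Z}_i(j)}$. *)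

From HB Require Import structures.
From mathcomp Require Import all_boot all_order all_algebra.
From mathcomp Require Import all_classical all_reals all_analysis.
Set Implicit Arguments. Unset Strict Implicit. Unset Printing Implicit Defensive.
Import Order.TTheory GRing.Theory Num.Theory.
Local Open Scope classical_set_scope.
Local Open Scope ring_scope.

Definition mutually_independent {d} {T : measurableType d} {R : realType}
  (P : probability T R) (n : nat) (dZ : 'I_n -> measure_display)
  (Zs : forall i, measurableType (dZ i)) (X : forall i, T -> Zs i) : Prop :=
  forall A : forall i, set (Zs i), (forall i, measurable (A i)) ->
    P [set t | forall i, A i (X i t)] = (\prod_(i < n) P (X i @^-1` A i))%E.

Definition Zmax {T : Type} {R : realType} (n N : nat) (W : 'I_n -> 'I_N -> T -> R)
  : T -> R :=
  fun t => \big[Num.max/0]_(j < N) `| n%:R^-1 * \sum_(i < n) W i j t |.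

Definition trunc {T : Type} {R : realType} (W E : T -> R) (K : R) : T -> R :=
  fun t => W t * ((E t <= K)%R : bool)%:R.

(* Off the event {E_i <= K} the truncated variable differs from Z_i(j) by
   |Z_i(j)| <= E_i <= E_i^p / K^(p-1).  Since a maximum of absolute values is
   1-Lipschitz for the sup norm, |Zt - Z| <= (1/n) sum_i E_i^p / K^(p-1)
   pointwise, whose expectation is at most M^p / K^(p-1) = M / n^(l(1-1/p)).
   For the variances, Var Zt_i(j) <= E Zt_i(j)^2 <= E Z_i(j)^2. *)

From HB Require Import structures.
From mathcomp Require Import all_boot all_order all_algebra.
From mathcomp Require Import all_classical all_reals all_analysis.
From mathcomp Require Import measurable_realfun.
From mathcomp Require Import ring lra.
Set Implicit Arguments. Unset Strict Implicit. Unset Printing Implicit Defensive.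
Import Order.TTheory GRing.Theory Num.Theory.
Local Open Scope classical_set_scope.
Local Open Scope ring_scope.

Section bigmax_norm.
Variables (R : realType) (I : finType).

Lemma bigmax_norm_ge0 (a : I -> R) : 0 <= \big[Num.max/0]_(j : I) `|a j|.
Proof. by elim/big_ind: _ => // x y x0 y0; rewrite le_max x0. Qed.

Lemma bigmax_normB_le (a b : I -> R) (c : R) : 0 <= c ->
  (forall j, `|a j - b j| <= c) ->
  `|\big[Num.max/0]_(j : I) `|a j| - \big[Num.max/0]_(j : I) `|b j| | <= c.
Proof.
move=> c0 ab.
have bigmax_le_addr (f g : I -> R) : (forall j, `|f j - g j| <= c) ->
    \big[Num.max/0]_(j : I) `|f j| <= \big[Num.max/0]_(j : I) `|g j| + c.
  move=> fg; apply: bigmax_le => [|j _]; first by rewrite addr_ge0 ?bigmax_norm_ge0.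
  rewrite -[f j](subrK (g j)) addrC; apply: le_trans (ler_normD _ _) _.
  by apply: lerD; [exact: le_bigmax | exact: fg].
have ba j : `|b j - a j| <= c by rewrite distrC.
have := bigmax_le_addr a b ab; have := bigmax_le_addr b a ba.
by rewrite ler_norml => ? ?; apply/andP; split; lra.
Qed.

End bigmax_norm.

Lemma measurable_bigmaxr d (T : measurableType d) (R : realType) (I : Type)
    (r : seq I) (f : I -> T -> R) :
  (forall i, measurable_fun setT (f i)) ->
  measurable_fun setT (fun t => \big[Num.max/0]_(i <- r) f i t).
Proof.
move=> mf; elim: r => [|a r IH].
  by under eq_fun do rewrite big_nil; exact: measurable_cst.
by under eq_fun do rewrite big_cons; exact: measurable_maxr.
Qed.

Section truncation.
Variables (T : Type) (R : realType) (W E : T -> R) (K : R).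
Hypothesis normW_le : forall t, `|W t| <= E t.

Lemma truncE t : trunc W E K t = if E t <= K then W t else 0.
Proof. by rewrite /trunc; case: ifP => _; rewrite ?mulr1 ?mulr0. Qed.

Lemma norm_trunc_le t : 0 <= K -> `|trunc W E K t| <= K.
Proof.
rewrite truncE; case: ifPn => [EK|_] K0; last by rewrite normr0.
exact: le_trans (normW_le t) EK.
Qed.

Lemma sqr_trunc_le t : trunc W E K t ^+ 2 <= W t ^+ 2.
Proof. by rewrite truncE; case: ifP; rewrite ?expr0n ?sqr_ge0. Qed.

(* Markov's trick: beyond the level K, E t <= E t * (E t / K) ^ (p - 1). *)
Lemma norm_truncB_le p t : 0 < K -> 1 <= p ->
  `|trunc W E K t - W t| <= E t `^ p / K `^ (p - 1).
Proof.
move=> K0 p1; rewrite truncE; have [_|KE] := leP (E t) K.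
  by rewrite subrr normr0 divr_ge0 ?powR_ge0.
have E0 : 0 < E t := lt_trans K0 KE.
rewrite sub0r normrN ler_pdivlMr ?powR_gt0 //.
rewrite -(mulr_powRB1 (ltW E0)) ?(lt_le_trans ltr01) //.
apply: le_trans (ler_wpM2r (powR_ge0 _ _) (normW_le t)) _.
by rewrite ler_pM2l // ge0_ler_powR ?nnegrE ?subr_ge0 // ltW.
Qed.

End truncation.

Lemma measurable_trunc d (T : measurableType d) (R : realType) (W E : T -> R) K :
  measurable_fun setT W -> measurable_fun setT E ->
  measurable_fun setT (trunc W E K).
Proof.
move=> mW mE; rewrite (funext (@truncE _ _ W E K)).
apply: measurable_fun_ifT => //.
exact: measurable_fun_ler mE (measurable_cst K).
Qed.

Lemma powR_div_truncation_level (R : realType) (n M p l : R) :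
  0 < n -> 0 < M -> 0 < p ->
  M `^ p / (n `^ (l / p) * M) `^ (p - 1) = M / n `^ (l * (1 - p^-1)).
Proof.
move=> n0 M0 p0.
have -> : l * (1 - p^-1) = l / p * (p - 1) by field; rewrite gt_eqF.
rewrite powRM ?powR_ge0 ?ltW // -powRrM -(mulr_powRB1 (ltW M0) p0) invfM.
have Mp0 : M `^ (p - 1) != 0 by rewrite gt_eqF ?powR_gt0.
have np0 : n `^ (l / p * (p - 1)) != 0 by rewrite gt_eqF ?powR_gt0.
by field; rewrite Mp0 np0.
Qed.

Section expectation_bounds.
Context d (T : measurableType d) (R : realType) (P : probability T R).
Local Open Scope ereal_scope.

Lemma Lfun_bounded (f : T -> R) (K r : R) : (0 <= r)%R ->
  measurable_fun setT f -> (forall t, `|f t| <= K)%R -> f \in Lfun P r%:E.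
Proof.
move=> r0 mf fK; rewrite inE; apply/andP; split; first by rewrite inE.
rewrite inE /finite_norm unlock /= poweR_lty //.
apply: (@le_lt_trans _ _ (\int[P]_x (K `^ r)%:E)).
  apply: ge0_le_integral => //.
  - apply/measurable_EFinP; apply: measurableT_comp (measurable_powR r) _.
    exact: measurableT_comp.
  - by move=> t _; rewrite lee_fin ge0_ler_powR // nnegrE (le_trans _ (fK t)).
by rewrite integral_cst //= probability_setT mule1 ltry.
Qed.

Lemma variance_le_expectation_sqr (X : T -> R) : X \in Lfun P 2%:E ->
  'V_P[X] <= 'E_P[X ^+ 2].
Proof.
move=> X2; rewrite varianceE // -[leRHS]sube0.
by apply: leeB => //; exact: sqre_ge0.
Qed.

Lemma le_abse_expectation (X : T -> R) : measurable_fun setT X ->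
  `|'E_P[X]| <= 'E_P[fun t => `|X t|%R].
Proof.
by move=> mX; rewrite unlock; apply: le_abse_integral => //; exact/measurable_EFinP.
Qed.

Lemma ge0_expectationZl (X : T -> R) (k : R) : (0 <= k)%R ->
  measurable_fun setT X -> (forall t, 0 <= X t)%R ->
  'E_P[fun t => (k * X t)%R] = k%:E * 'E_P[X].
Proof.
move=> k0 mX X0; rewrite unlock; under eq_integral do rewrite EFinM.
by rewrite ge0_integralZl_EFin // => [t _|]; [rewrite lee_fin | exact/measurable_EFinP].
Qed.

Lemma ge0_expectation_sum (I : Type) (r : seq I) (X : I -> T -> R) :
  (forall i, measurable_fun setT (X i)) -> (forall i t, 0 <= X i t)%R ->
  'E_P[fun t => (\sum_(i <- r) X i t)%R] = \sum_(i <- r) 'E_P[X i].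
Proof.
move=> mX X0; rewrite unlock; under eq_integral do rewrite -sumEFin.
rewrite ge0_integral_sum // => [i|i t _]; first exact/measurable_EFinP.
by rewrite lee_fin.
Qed.

End expectation_bounds.

Section Zmax.
Variables (T : Type) (R : realType) (n N : nat).

Lemma norm_ZmaxB_le (W W' : 'I_n -> 'I_N -> T -> R) (b : 'I_n -> T -> R) t :
  (forall i, 0 <= b i t) -> (forall i j, `|W i j t - W' i j t| <= b i t) ->
  `|Zmax W t - Zmax W' t| <= n%:R^-1 * \sum_(i < n) b i t.
Proof.
move=> b0 WW'; apply: bigmax_normB_le => [|j].
  by rewrite mulr_ge0 ?invr_ge0 ?sumr_ge0.
rewrite -mulrBr -sumrB normrM ger0_norm ?invr_ge0 // ler_wpM2l ?invr_ge0 //.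
by apply: le_trans (ler_norm_sum _ _ _) _; apply: ler_sum => i _.
Qed.

End Zmax.

Lemma measurable_Zmax d (T : measurableType d) (R : realType) n N
    (W : 'I_n -> 'I_N -> T -> R) :
  (forall i j, measurable_fun setT (W i j)) -> measurable_fun setT (Zmax W).
Proof.
move=> mW; apply: measurable_bigmaxr => j.
apply: measurableT_comp (@normr_measurable R _) _.
by apply: measurable_funM => //; exact: measurable_sum.
Qed.

Section truncated_moments.
Context d (T : measurableType d) (R : realType) (P : probability T R).
Local Open Scope ereal_scope.

Lemma variance_trunc_le (W E : T -> R) (K : R) : (0 <= K)%R ->
  measurable_fun setT W -> measurable_fun setT E -> (forall t, `|W t| <= E t)%R ->
  'V_P[trunc W E K] <= 'E_P[fun t => (W t ^+ 2)%R].
Proof.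
move=> K0 mW mE WE; have mWt := measurable_trunc K mW mE.
have sqrE (f : T -> R) t : ((f ^+ 2) t = f t ^+ 2)%R by rewrite !expr2.
apply: le_trans (variance_le_expectation_sqr _) _.
  by apply: (Lfun_bounded P _ mWt (fun t => norm_trunc_le WE t K0)).
apply: expectation_le => //.
- by rewrite expr2; exact: measurable_funM.
- exact: measurable_funX.
- by move=> t; rewrite sqrE sqr_ge0.
- by move=> t; rewrite sqr_ge0.
- by apply: aeW => t; rewrite sqrE; exact: sqr_trunc_le.
Qed.

Lemma abse_expectation_trunc_ZmaxB_le n N (W : 'I_n -> 'I_N -> T -> R)
    (E : 'I_n -> T -> R) (K p a : R) :
  (0 < n)%N -> (0 < K)%R -> (1 <= p)%R ->
  (forall i j, measurable_fun setT (W i j)) -> (forall i, measurable_fun setT (E i)) ->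
  (forall i j t, `|W i j t| <= E i t)%R ->
  (forall i, 'E_P[fun t => (E i t `^ p)%R] <= a%:E) ->
  `|'E_P[Zmax (fun i j => trunc (W i j) (E i) K) \- Zmax W]|
    <= (a / K `^ (p - 1))%:E.
Proof.
move=> n0 K0 p1 mW mE WE Ea.
pose c := (K `^ (p - 1))^-1%R.
have c0 : (0 <= c)%R by rewrite invr_ge0 powR_ge0.
pose g i t := (c * E i t `^ p)%R.
have mEp i : measurable_fun setT (fun t => E i t `^ p)%R.
  exact: measurableT_comp (measurable_powR p) (mE i).
have mg i : measurable_fun setT (g i) by exact: measurable_funM.
have g0 i t : (0 <= g i t)%R by rewrite mulr_ge0 ?powR_ge0.
have mB : measurable_fun setT (fun t => n%:R^-1 * \sum_(i < n) g i t)%R.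
  by apply: measurable_funM => //; exact: measurable_sum.
have mZ : measurable_fun setT
    (Zmax (fun i j => trunc (W i j) (E i) K) \- Zmax W)%R.
  by apply: measurable_funB; apply: measurable_Zmax => // i j;
    exact: measurable_trunc.
apply: le_trans (le_abse_expectation P mZ) _.
apply: (@le_trans _ _ 'E_P[fun t => n%:R^-1 * \sum_(i < n) g i t]%R).
  apply: expectation_le => //.
  - exact: measurableT_comp (@normr_measurable R _) mZ.
  - by move=> t; rewrite mulr_ge0 ?invr_ge0 ?sumr_ge0.
  - apply: aeW => t; apply: norm_ZmaxB_le => // i j.
    by rewrite /g mulrC; exact: norm_truncB_le.
have Eg i : 'E_P[g i] <= (c * a)%:E.
  by rewrite ge0_expectationZl // ?EFinM ?lee_wpmul2l ?lee_fin // => t; rewrite powR_ge0.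
rewrite ge0_expectationZl ?invr_ge0 ?ge0_expectation_sum //; last 2 first.
- exact: measurable_sum.
- by move=> t; rewrite sumr_ge0.
apply: (@le_trans _ _ ((n%:R^-1)%:E * \sum_(i < n) (c * a)%:E)).
  by apply: lee_wpmul2l; [rewrite lee_fin invr_ge0 | exact: lee_sum].
rewrite sumEFin -EFinM lee_fin sumr_const card_ord -[(c * a *+ n)%R]mulr_natr.
by rewrite mulrC mulfK ?pnatr_eq0 -?lt0n // mulrC.
Qed.

End truncated_moments.

Theorem lemma5p2 (R : realType) (d : measure_display) (T : measurableType d)
  (P : probability T R) (n N : nat)
  (dZ : 'I_n -> measure_display) (Zs : forall i, measurableType (dZ i))
  (X : forall i, T -> Zs i)
  (z : forall i : 'I_n, 'I_N -> Zs i -> R) (e : forall i : 'I_n, Zs i -> R)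
  (p M l : R) :
  (0 < n)%N -> (0 < N)%N ->
  (forall i, measurable_fun setT (X i)) ->
  mutually_independent P X ->
  (forall i j, measurable_fun setT (z i j)) ->
  (forall i, measurable_fun setT (e i)) ->
  (forall i j x, `| z i j x | <= e i x) ->
  1 <= p -> 0 < M ->
  (forall i, ('E_P[(fun t => e i (X i t) `^ p)%R] <= (M `^ p)%:E)%E) ->
  1 <= l -> l <= p ->
  let K := n%:R `^ (l / p) * M in
  let Zij := fun i j t => z i j (X i t) in
  let Zt := fun i j => trunc (Zij i j) (fun t => e i (X i t)) K in
  let sigma := sqrte (\big[Order.max/0%E]_(j < N)
                  ((n%:R^-1)%:E * \sum_(i < n) 'E_P[(fun t => Zij i j t ^+ 2)%R]))%E in
  let sigma_t := sqrte (\big[Order.max/0%E]_(j < N)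
                  ((n%:R^-1)%:E * \sum_(i < n) 'V_P[Zt i j]))%E in
  (`| 'E_P[(Zmax Zt \- Zmax Zij)%R] | <= (M / n%:R `^ (l * (1 - p^-1)))%:E)%E
  /\ (sigma_t <= sigma)%E.
Proof.
move=> n0 _ mX _ mz me ze p1 M0 EeM _ _ K Zij Zt sigma sigma_t.
have mZ i j : measurable_fun setT (Zij i j) by exact: measurableT_comp.
have mE i : measurable_fun setT (fun t => e i (X i t)) by exact: measurableT_comp.
have K0 : 0 < K by rewrite mulr_gt0 // powR_gt0 // ltr0n.
split.
  have n0' : (0 < n%:R :> R) by rewrite ltr0n.
  rewrite -(powR_div_truncation_level _ n0' M0 (lt_le_trans ltr01 p1)).
  by apply: abse_expectation_trunc_ZmaxB_le => // i j t; exact: ze.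
rewrite /sigma_t /sigma lee_sqrt; last first.
  elim/big_ind: _ => // [x y x0 y0|j _]; first by rewrite le_max x0.
  rewrite mule_ge0 ?lee_fin ?invr_ge0 // sume_ge0 // => i _.
  by apply: expectation_ge0 => t; exact: sqr_ge0.
apply: le_bigmax2 => j _; apply: lee_wpmul2l; first by rewrite lee_fin invr_ge0.
apply: lee_sum => i _; apply: variance_trunc_le (ltW K0) (mZ i j) (mE i) _.
by move=> t; exact: ze.
Qed.
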